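(* Let integers $n \geq 0$, $m \geq 2$ and $k \geq 1$ be given, let $q=(q_1,\dots,q_m)$ be a probability distribution on $\{1,\dots,m\}$, and let $j \in \{1,\dots,m-1\}$. Define $q'$ by $q'_\ell = q_\ell$ for all $\ell \notin \{j,j+1\}$ and \[ q'_j = q_j + q_{j+1} - \|(q_j,q_{j+1})\|_k, \qquad q'_{j+1} = \|(q_j,q_{j+1})\|_k, \] where $\|(a,b)\|_k = (a^k+b^k)^{1/k}$. For a distribution $r$ on $\{1,\dots,m\}$ and $i \in \{1,\dots,m\}$, let $M^{r}_{i}$ denote the maximum load of any bin in $\{i,\dots,m\}$ when $n$ balls are thrown independently into the $m$ bins according to $r$. Then \[ \Pr[M^{q}_{j} < k] \leq \Pr[M^{q'}_{j+1} < k]. \]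
   Context: The load of a bin is the number of balls that landed in it. *)

From HB Require Import structures.
From mathcomp Require Import all_boot all_order all_algebra.
From mathcomp Require Import reals exp.
Set Implicit Arguments. Unset Strict Implicit. Unset Printing Implicit Defensive.
Import Order.TTheory GRing.Theory Num.Theory.
Local Open Scope ring_scope.

(* Bins are 'I_m (0-based: paper's bin l is our bin l-1); balls are 'I_n.
   An outcome of throwing n balls is f : {ffun 'I_n -> 'I_m}. *)

Definition load (n m : nat) (f : {ffun 'I_n -> 'I_m}) (b : 'I_m) : nat :=
  #|[set t | f t == b]|.

Definition is_distr (R : realType) (m : nat) (r : 'I_m -> R) : Prop :=
  (forall l, 0 <= r l) /\ \sum_(l < m) r l = 1.

Definition prob_maxload_lt (R : realType) (n m : nat) (r : 'I_m -> R)
    (i k : nat) : R :=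
  \sum_(f : {ffun 'I_n -> 'I_m} | [forall b : 'I_m, (i <= b)%N ==> (load f b < k)%N])
    \prod_(t < n) r (f t).

Definition knorm (R : realType) (k : nat) (a b : R) : R :=
  powR (a ^+ k + b ^+ k) (k%:R)^-1.

Definition qprime (R : realType) (m k : nat) (q : 'I_m -> R) (j j1 : 'I_m)
    : 'I_m -> R :=
  fun l => if l == j then q j + q j1 - knorm k (q j) (q j1)
           else if l == j1 then knorm k (q j) (q j1)
           else q l.

From mathcomp Require Import all_boot all_order all_algebra.
From mathcomp Require Import reals exp.
From mathcomp Require Import zify ring.
Set Implicit Arguments. Unset Strict Implicit. Unset Printing Implicit Defensive.
Import Order.TTheory GRing.Theory Num.Theory.
Local Open Scope ring_scope.

(* Merge bin j+1 into bin j and condition on the resulting placement.  The bins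
   other than j, j+1 have the same probabilities under q and q', and the s balls
   of the merged bin are split between j and j+1 binomially with weights (a, b)
   under q and (a + b - c, c) under q', where a = q_j, b = q_(j+1) and
   c = ||(a,b)||_k.  So it suffices that "both parts < k" is less likely under
   (a, b) than "second part < k" under (a + b - c, c).  Both masses obey Pascal's
   recurrence F(s+1) = (a + b) F(s) - (boundary terms), and, since c^k = a^k + b^k
   and a + b - c <= min(a, b), the boundary term lost on the right is at most the
   one lost on the left; induction on s concludes. *)

Section BinomialTerms.
Variable R : comPzRingType.
Implicit Types x y : R.

Definition bin_term x y (s i : nat) : R := 'C(s, i)%:R * x ^+ (s - i) * y ^+ i.

Lemma bin_term_small x y s i : (s < i)%N -> bin_term x y s i = 0.
Proof. by move=> lt_si; rewrite /bin_term bin_small // !mul0r. Qed.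

Lemma bin_term0 x y i : bin_term x y 0 i = (i == 0)%N%:R.
Proof. by case: i => [|i]; rewrite /bin_term ?bin0 ?bin0n /= ?mul0r ?mulr1. Qed.

Lemma bin_termS0 x y s : bin_term x y s.+1 0 = x * bin_term x y s 0.
Proof. by rewrite /bin_term !bin0 !subn0 !expr0 exprS; ring. Qed.

Lemma bin_termSS x y s i :
  bin_term x y s.+1 i.+1 = y * bin_term x y s i + x * bin_term x y s i.+1.
Proof.
rewrite /bin_term binS natrD subSS.
have [lt_is|le_si] := ltnP i s.
  by rewrite -(subnSK lt_is) !exprS; ring.
by rewrite (@bin_small s i.+1) // exprS; ring.
Qed.

Lemma sum_bin_termS x y s K (g : nat -> R) :
  \sum_(i < K.+1) bin_term x y s.+1 i * g i =
  x * \sum_(i < K.+1) bin_term x y s i * g i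
  + y * \sum_(i < K) bin_term x y s i * g i.+1.
Proof.
rewrite big_ord_recl [X in x * X]big_ord_recl bin_termS0 mulrDr -addrA; congr (_ + _).
  by rewrite mulrA.
under eq_bigr => i _ do rewrite lift0 bin_termSS mulrDl -(mulrA y) -(mulrA x).
by rewrite big_split /= -!mulr_sumr addrC.
Qed.

Lemma sum_bin_term_sub_eq x y s k :
  \sum_(i < k.+1) bin_term x y s i * (s - i == k)%N%:R
  = bin_term y x s k * (s - k <= k)%N%:R.
Proof.
rewrite (eq_bigr (fun i : 'I_k.+1 =>
    bin_term x y s i * ((k <= s) && (i == (s - k)%N :> nat))%N%:R)) => [|i _].
  under eq_bigr => i _ do rewrite mulr_natr mulrb.
  rewrite -big_mkcond /=.
  have [le_ks|lt_sk] := leqP k s; last first.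
    by rewrite big_pred0 // bin_term_small // mul0r.
  rewrite big_ord1_eq ltnS mulr_natr mulrb.
  by rewrite /bin_term subKn // bin_sub // mulrAC.
have [lt_si|le_is] := ltnP s i; first by rewrite bin_term_small ?mul0r.
suff -> : (s - i == k)%N = (k <= s)%N && (i == (s - k)%N :> nat) by [].
by apply/eqP/andP => [?|[? /eqP ?]]; [split; [lia | apply/eqP; lia] | lia].
Qed.

Variable k : nat.

(* Unnormalised binomial masses of s balls thrown into two bins of weights x, y:
   at most k balls in the second bin, resp. at most k balls in each bin. *)
Definition bin_cdf x y s := \sum_(i < k.+1) bin_term x y s i.

Definition bin_cdf_both x y s :=
  \sum_(i < k.+1) bin_term x y s i * (s - i <= k)%N%:R.

Lemma bin_cdf0 x y : bin_cdf x y 0 = 1.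
Proof.
rewrite /bin_cdf big_ord_recl bin_term0 big1 ?addr0 // => i _.
by rewrite bin_term0.
Qed.

Lemma bin_cdf_both0 x y : bin_cdf_both x y 0 = 1.
Proof.
rewrite -(bin_cdf0 x y); apply: eq_bigr => i _.
by rewrite sub0n leq0n mulr1.
Qed.

Lemma bin_cdfS x y s :
  bin_cdf x y s.+1 = (x + y) * bin_cdf x y s - y * bin_term x y s k.
Proof.
have := sum_bin_termS x y s k (fun=> 1).
under eq_bigr do rewrite mulr1.
under [in RHS]eq_bigr do rewrite mulr1.
under [X in _ + _ * X]eq_bigr do rewrite mulr1.
rewrite -/(bin_cdf x y s.+1) -/(bin_cdf x y s) => ->.
by rewrite /bin_cdf big_ord_recr /=; ring.
Qed.

Lemma bin_cdf_bothS x y s :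
  bin_cdf_both x y s.+1 = (x + y) * bin_cdf_both x y s
    - (x * bin_term y x s k + y * bin_term x y s k) * (s - k <= k)%N%:R.
Proof.
rewrite /bin_cdf_both (sum_bin_termS x y s k (fun i => (s.+1 - i <= k)%N%:R)).
under [X in _ + _ * X]eq_bigr do rewrite subSS.
have -> : \sum_(i < k.+1) bin_term x y s i * (s.+1 - i <= k)%N%:R
    = \sum_(i < k.+1) bin_term x y s i * (s - i <= k)%N%:R
      - \sum_(i < k.+1) bin_term x y s i * (s - i == k)%N%:R.
  rewrite -sumrB; apply: eq_bigr => i _.
  have [lt_si|le_is] := ltnP s i; first by rewrite bin_term_small // !mul0r subr0.
  rewrite -mulrBr subSn //; congr (_ * _).
  by case: ltngtP => /=; rewrite ?subr0 ?subrr.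
rewrite sum_bin_term_sub_eq big_ord_recr /=.
by ring.
Qed.

End BinomialTerms.

Section BinomialInequality.
Variable R : realDomainType.
Variable k : nat.

Lemma bin_term_ge0 (x y : R) s i : 0 <= x -> 0 <= y -> 0 <= bin_term x y s i.
Proof. by move=> x_ge0 y_ge0; rewrite !mulr_ge0 ?exprn_ge0. Qed.

Lemma bin_cdf_ge0 (x y : R) s : 0 <= x -> 0 <= y -> 0 <= bin_cdf k x y s.
Proof. by move=> x_ge0 y_ge0; apply: sumr_ge0 => i _; exact: bin_term_ge0. Qed.

Lemma bin_cdf_both_eq0 (x y : R) s : (k + k < s)%N -> bin_cdf_both k x y s = 0.
Proof.
move=> lt_2ks; apply: big1 => i _.
have -> : (s - i <= k)%N = false by have := ltn_ord i; lia.
by rewrite mulr0.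
Qed.

(* With e = s - k this reads d^e (a^(k+1) + b^(k+1)) <= b^e a^(k+1) + a^e b^(k+1). *)
Lemma bin_term_boundary_le (a b c d : R) s :
  0 <= d -> d <= a -> d <= b -> c ^+ k.+1 = a ^+ k.+1 + b ^+ k.+1 ->
  c * bin_term d c s k <= a * bin_term b a s k + b * bin_term a b s k.
Proof.
move=> d_ge0 le_da le_db cE.
have a_ge0 : 0 <= a := le_trans d_ge0 le_da.
have b_ge0 : 0 <= b := le_trans d_ge0 le_db.
set C : R := 'C(s, k)%:R; set e := (s - k)%N.
have -> : c * bin_term d c s k = C * d ^+ e * a ^+ k.+1 + C * d ^+ e * b ^+ k.+1.
  by rewrite -mulrDr -cE /bin_term exprS -/C -/e; ring.
have -> : a * bin_term b a s k + b * bin_term a b s k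
    = C * b ^+ e * a ^+ k.+1 + C * a ^+ e * b ^+ k.+1.
  by rewrite /bin_term !exprS -/C -/e; ring.
have C_ge0 : 0 <= C by rewrite ler0n.
by apply: lerD; rewrite ler_wpM2r ?exprn_ge0 // ler_wpM2l // lerXn2r.
Qed.

Lemma bin_cdf_both_le_bin_cdf (a b c : R) s :
  0 <= a -> 0 <= b -> c ^+ k.+1 = a ^+ k.+1 + b ^+ k.+1 ->
  a <= c -> b <= c -> c <= a + b ->
  bin_cdf_both k a b s <= bin_cdf k (a + b - c) c s.
Proof.
move=> a_ge0 b_ge0 cE le_ac le_bc le_cab.
set d := a + b - c.
have d_ge0 : 0 <= d by rewrite subr_ge0.
have le_da : d <= a by rewrite lerBlDr lerD2l.
have le_db : d <= b by rewrite lerBlDr addrC lerD2l.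
have c_ge0 : 0 <= c := le_trans a_ge0 le_ac.
elim: s => [|s IH]; first by rewrite bin_cdf_both0 bin_cdf0.
have [lt_2ks|le_s2k] := ltnP (k + k) s.
  by rewrite bin_cdf_both_eq0 ?bin_cdf_ge0 //; lia.
rewrite bin_cdf_bothS bin_cdfS subrK.
have -> : (s - k <= k)%N by lia.
rewrite mulr1.
by apply: lerB; [rewrite ler_wpM2l ?addr_ge0 | exact: bin_term_boundary_le].
Qed.

End BinomialInequality.

Lemma addrXn_le_exprD (R : numDomainType) (a b : R) n :
  0 <= a -> 0 <= b -> a ^+ n.+1 + b ^+ n.+1 <= (a + b) ^+ n.+1.
Proof.
move=> a_ge0 b_ge0; rewrite !(exprSr _ n) mulrDr.
by apply: lerD; rewrite ler_wpM2r // lerXn2r ?nnegrE ?addr_ge0 // ?lerDl ?lerDr.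
Qed.

Lemma knorm_ge0 (R : realType) k (a b : R) : 0 <= knorm k a b.
Proof. exact: powR_ge0. Qed.

Section KNorm.
Variables (R : realType) (k : nat) (a b : R).
Hypotheses (a_ge0 : 0 <= a) (b_ge0 : 0 <= b).

Lemma knormX : knorm k.+1 a b ^+ k.+1 = a ^+ k.+1 + b ^+ k.+1.
Proof.
rewrite /knorm -powR_mulrn ?powR_ge0 // -powRrM mulVf ?powRr1 ?pnatr_eq0 //.
by rewrite addr_ge0 ?exprn_ge0.
Qed.

Lemma knorm_ge_l : a <= knorm k.+1 a b.
Proof.
by rewrite -(ler_pXn2r (ltn0Sn k)) ?nnegrE ?knorm_ge0 // knormX lerDl exprn_ge0.
Qed.

Lemma knorm_ge_r : b <= knorm k.+1 a b.
Proof.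
by rewrite -(ler_pXn2r (ltn0Sn k)) ?nnegrE ?knorm_ge0 // knormX lerDr exprn_ge0.
Qed.

Lemma knorm_le_add : knorm k.+1 a b <= a + b.
Proof.
rewrite -(ler_pXn2r (ltn0Sn k)) ?nnegrE ?knorm_ge0 ?addr_ge0 //.
by rewrite knormX addrXn_le_exprD.
Qed.

End KNorm.

Lemma sum_subsets_by_card (R : pzSemiRingType) (I : finType) (S : {set I})
    (p : pred nat) (G : nat -> R) K :
  (forall v, p v -> (v <= K)%N) ->
  \sum_(T : {set I} | (T \subset S) && p #|T|) G #|T|
  = \sum_(i < K.+1) 'C(#|S|, i)%:R * G i * (p i)%:R.
Proof.
move=> p_le.
rewrite (partition_big (fun T : {set I} => inord #|T| : 'I_K.+1) xpredT) //.
apply: eq_bigr => i _.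
have inordE (T : {set I}) : p #|T| -> (inord #|T| == i) = (#|T| == i).
  by move=> pT; rewrite -val_eqE /= inordK // ltnS p_le.
have [pi|npi] := boolP (p i); last first.
  rewrite mulr0 big_pred0 // => T; apply/negP => /andP[/andP[_ pT]].
  by rewrite inordE // => /eqP eTi; rewrite -eTi pT in npi.
rewrite mulr1 mulr_natl -cards_draws -sumr_const.
apply: eq_big => [T|T /andP[/andP[_ pT]]]; last by rewrite inordE // => /eqP ->.
rewrite inE; have [eTi|neTi] := eqVneq #|T| i.
  by rewrite eTi pi inord_val eqxx !andbT.
by case pT: (p #|T|); rewrite ?andbF //= inordE // (negbTE neTi) andbF.
Qed.

Definition balls n m (f : {ffun 'I_n -> 'I_m}) (b : 'I_m) : {set 'I_n} :=
  [set t | f t == b].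

Lemma prod_by_loads (R : comPzSemiRingType) n m (r : 'I_m -> R)
    (f : {ffun 'I_n -> 'I_m}) :
  \prod_(t < n) r (f t) = \prod_(b < m) r b ^+ load f b.
Proof.
rewrite (partition_big f xpredT) //; apply: eq_bigr => b _.
rewrite (eq_bigl [in balls f b]) => [|t]; last by rewrite inE.
by rewrite (eq_bigr (fun=> r b)) ?prodr_const // => t; rewrite inE => /eqP ->.
Qed.

Section MergeBins.
Variables (n m : nat) (j j1 : 'I_m).
Hypothesis neq_j : j != j1.
Local Notation outcome := {ffun 'I_n -> 'I_m}.
Implicit Types (f g : outcome) (T : {set 'I_n}).

Definition merge_bin f : outcome := [ffun t => if f t == j1 then j else f t].

Definition split_bin g T : outcome := [ffun t => if t \in T then j1 else g t].

Lemma merge_bin_neq f t : merge_bin f t != j1.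
Proof. by rewrite ffunE; case: (f t =P j1) => [_|/eqP]. Qed.

Lemma load_merge_bin f b : b != j -> b != j1 -> load (merge_bin f) b = load f b.
Proof.
move=> neq_bj neq_bj1; apply: eq_card => t; rewrite !inE ffunE.
by case: (f t =P j1) => [->|//]; rewrite !(eq_sym _ b) (negbTE neq_bj) (negbTE neq_bj1).
Qed.

Lemma split_merge_bin f : split_bin (merge_bin f) (balls f j1) = f.
Proof. by apply/ffunP => t; rewrite !ffunE inE; case: (f t =P j1) => [->|]. Qed.

Section SplitBin.
Variable g : outcome.
Hypothesis g_neq : forall t, g t != j1.

Lemma balls_split_bin T : balls (split_bin g T) j1 = T.
Proof.
apply/setP => t; rewrite inE ffunE.
by case: (t \in T); rewrite ?eqxx ?(negbTE (g_neq t)).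
Qed.

Lemma merge_split_binE T : (merge_bin (split_bin g T) == g) = (T \subset balls g j).
Proof.
apply/eqP/subsetP => [e t tT|sub].
  by rewrite inE -e !ffunE tT eqxx.
apply/ffunP => t; rewrite !ffunE; case: (boolP (t \in T)) => [tT|_].
  by rewrite eqxx; move/sub: tT; rewrite inE => /eqP.
by rewrite (negbTE (g_neq t)).
Qed.

Lemma load_split_bin T :
  T \subset balls g j -> load (split_bin g T) j = (#|balls g j| - #|T|)%N.
Proof.
move=> sub; rewrite -(setIidPr sub) -cardsD (setIidPr sub).
apply: eq_card => t; rewrite !inE ffunE.
by case: (t \in T); rewrite //= eq_sym (negbTE neq_j).
Qed.

End SplitBin.

Variable R : comPzRingType.
Implicit Type r : 'I_m -> R.

Definition weight_off_pair r f :=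
  \prod_(b < m | (b != j) && (b != j1)) r b ^+ load f b.

Lemma prod_split_pair r f :
  \prod_(t < n) r (f t) = r j ^+ load f j * r j1 ^+ load f j1 * weight_off_pair r f.
Proof.
by rewrite prod_by_loads (bigD1 j) // (bigD1 j1) 1?eq_sym //= mulrA.
Qed.

Lemma weight_off_pair_merge_bin r f :
  weight_off_pair r (merge_bin f) = weight_off_pair r f.
Proof. by apply: eq_bigr => b /andP[? ?]; rewrite load_merge_bin. Qed.

Lemma sum_prod_by_merge_bin r (P : pred outcome) (h : nat -> nat -> bool) :
  (forall f, P (merge_bin f) = P f) ->
  \sum_(f | h (load f j) (load f j1) && P f) \prod_(t < n) r (f t)
  = \sum_(g | P g && [forall t, g t != j1]) weight_off_pair r g *
      \sum_(T : {set 'I_n} | (T \subset balls g j) && h (#|balls g j| - #|T|)%N #|T|)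
         r j ^+ (#|balls g j| - #|T|) * r j1 ^+ #|T|.
Proof.
move=> P_merge.
rewrite (partition_big merge_bin (fun g => P g && [forall t, g t != j1])); last first.
  by move=> f /andP[_ Pf]; rewrite P_merge Pf; apply/forallP => t; exact: merge_bin_neq.
apply: eq_bigr => g /andP[Pg /forallP g_neq].
rewrite (reindex_onto (split_bin g) (fun f => balls f j1)); last first.
  by move=> f /andP[_ /eqP <-]; exact: split_merge_bin.
rewrite big_distrr /=; apply: eq_big => [T|T /andP[/andP[_ /eqP e] _]].
  rewrite balls_split_bin // eqxx andbT merge_split_binE //.
  case: (boolP (T \subset balls g j)) => [sub|]; last by rewrite andbF.
  rewrite -P_merge (eqP (_ : merge_bin (split_bin g T) == g)) ?merge_split_binE //.
  by rewrite Pg load_split_bin // /load -/(balls _ j1) balls_split_bin // !andbT.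
have sub : T \subset balls g j by rewrite -merge_split_binE // e.
rewrite prod_split_pair -weight_off_pair_merge_bin e mulrC load_split_bin //.
by rewrite /load -/(balls _ j1) balls_split_bin.
Qed.

Lemma sum_prod_by_merge_bin_term r (P : pred outcome) (h : nat -> nat -> bool) K :
  (forall f, P (merge_bin f) = P f) -> (forall u v, h u v -> (v <= K)%N) ->
  \sum_(f | h (load f j) (load f j1) && P f) \prod_(t < n) r (f t)
  = \sum_(g | P g && [forall t, g t != j1]) weight_off_pair r g *
      \sum_(i < K.+1) bin_term (r j) (r j1) (load g j) i
                      * (h (load g j - i) i)%N%:R.
Proof.
move=> P_merge h_le; rewrite sum_prod_by_merge_bin //.
apply: eq_bigr => g _; congr (_ * _).
rewrite (@sum_subsets_by_card _ _ _ (fun v => h (#|balls g j| - v)%N v)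
  (fun v => r j ^+ (#|balls g j| - v) * r j1 ^+ v) K).
  by apply: eq_bigr => i _; rewrite mulrA.
by move=> v /h_le.
Qed.

End MergeBins.

Lemma forall_leq_ord m (i : 'I_m) (p : pred 'I_m) :
  [forall b : 'I_m, (i <= b)%N ==> p b]
  = p i && [forall b : 'I_m, (i < b)%N ==> p b].
Proof.
apply/forallP/andP => [all_p|[pi /forallP all_p] b].
  split; first by have := all_p i; rewrite leqnn.
  by apply/forallP => b; apply/implyP => /ltnW le_ib; exact: (implyP (all_p b)).
by rewrite leq_eqVlt; case: (nat_of_ord i =P b) => [/val_inj <-|_] //=.
Qed.

Theorem lemma12 (R : realType) (n m k : nat) (q : 'I_m -> R) (j j1 : 'I_m) :
  (2 <= m)%N -> (1 <= k)%N -> is_distr q ->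
  nat_of_ord j1 = (nat_of_ord j).+1 ->
  prob_maxload_lt n q j k <= prob_maxload_lt n (qprime k q j j1) j1 k.
Proof.
move=> _ k_gt0 [q_ge0 _] j1E; case: k k_gt0 => // k _.
have neq_j : j != j1 by rewrite -val_eqE /= j1E neq_ltn ltnSn.
pose beyond (f : {ffun 'I_n -> 'I_m}) :=
  [forall b : 'I_m, (j1 < b)%N ==> (load f b < k.+1)%N].
have beyond_merge f : beyond (merge_bin j j1 f) = beyond f.
  apply: eq_forallb => b; case: (ltnP j1 b) => //= lt_j1b.
  by rewrite load_merge_bin // -val_eqE /=; lia.
rewrite /prob_maxload_lt.
under eq_bigl => f do rewrite forall_leq_ord -j1E forall_leq_ord andbA.
under [X in _ <= X]eq_bigl => f do rewrite forall_leq_ord.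
rewrite (sum_prod_by_merge_bin_term (h := fun u v => (u < k.+1)%N && (v < k.+1)%N)
  (K := k) neq_j q beyond_merge); last by move=> u v /andP[].
rewrite (sum_prod_by_merge_bin_term (h := fun _ v => (v < k.+1)%N) (K := k) neq_j
  (qprime k.+1 q j j1) beyond_merge) //.
apply: ler_sum => g /andP[_ /forallP g_neq].
have -> : weight_off_pair j j1 (qprime k.+1 q j j1) g = weight_off_pair j j1 q g.
  by apply: eq_bigr => b /andP[nbj nbj1]; rewrite /qprime (negbTE nbj) (negbTE nbj1).
apply: ler_wpM2l; first by apply: prodr_ge0 => b _; rewrite exprn_ge0.
rewrite /qprime eqxx eq_sym (negbTE neq_j) eqxx.
under eq_bigr => i _ do rewrite ltn_ord andbT.
under [X in _ <= X]eq_bigr => i _ do rewrite ltn_ord mulr1.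
exact: bin_cdf_both_le_bin_cdf (knormX _ _ _) (knorm_ge_l _ _ _)
  (knorm_ge_r _ _ _) (knorm_le_add _ _ _).
Qed.
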